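(* Let $t$ be a normal, almost closed term with $\Gamma\vdash t:\sigma$ for some context $\Gamma$. If $\sigma=\mathbf{L}(\tau)$ then $t$ is a list; if $\sigma=\mathbf{B}$ then $t$ is $\mathsf{tt}$ or $\mathsf{ff}$; if $\sigma=\Diamond$ then $t$ is a variable of type $\Diamond$.
   Context: Types: $\rho,\tau::=\Diamond\mid\mathbf{B}\mid\tau\multimap\rho\mid\tau\otimes\rho\mid\tau\times\rho\mid\mathbf{L}(\tau)$. Raw terms: $r,s,t::=x^\tau\mid c\mid\lambda x^\tau.\,t\mid\langle t,s\rangle\mid ts\mid\{t\}$, where each variable $x^\tau$ carries a type (infinitely many variables of each type), application associates to the left, terms are identified up to renaming of bound variables ($\lambda$ is the only binder), and the constants $c$ with their types are $\mathsf{tt},\mathsf{ff}:\mathbf{B}$; $\mathsf{nil}_\tau:\mathbf{L}(\tau)$; $\mathsf{cons}_\tau:\Diamond\multimap\tau\multimap\mathbf{L}(\tau)\multimap\mathbf{L}(\tau)$; $\otimes_{\tau,\rho}:\tau\multimap\rho\multimap\tau\otimes\rho$. A context is a finite set of typed variables; $\Gamma_1,\Gamma_2$ denotes $\Gamma_1\cup\Gamma_2$ and presupposes $\Gamma_1\cap\Gamma_2=\emptyset$; $x^\tau$ also denotes $\{x^\tau\}$. The relation $\Gamma\vdash t:\tau$ is inductively defined by: (Var) $\Gamma,x^\tau\vdash x:\tau$; (Const) $\Gamma\vdash c:\tau$ for a constant $c$ of type $\tau$; ($\multimap^+$) from $\Gamma\cup\{x^\tau\}\vdash t:\rho$ infer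 $\Gamma\vdash\lambda x^\tau.t:\tau\multimap\rho$; ($\multimap^-$) from $\Gamma_1\vdash t:\tau\multimap\rho$ and $\Gamma_2\vdash s:\tau$ infer $\Gamma_1,\Gamma_2\vdash ts:\rho$; ($\times^+$) from $\Gamma\vdash t:\tau$ and $\Gamma\vdash s:\rho$ infer $\Gamma\vdash\langle t,s\rangle:\tau\times\rho$; ($\times^-_1$) from $\Gamma\vdash t:\tau\times\rho$ infer $\Gamma\vdash t\,\mathsf{tt}:\tau$; ($\times^-_0$) from $\Gamma\vdash t:\tau\times\rho$ infer $\Gamma\vdash t\,\mathsf{ff}:\rho$; ($\mathbf{B}^-$) from $\Gamma_1\vdash t:\mathbf{B}$, $\Gamma_2\vdash s:\tau$, $\Gamma_2\vdash r:\tau$ infer $\Gamma_1,\Gamma_2\vdash t\langle s,r\rangle:\tau$; ($\otimes^-$) from $\Gamma_1\vdash t:\tau\otimes\rho$ and $\Gamma_2,x^\tau,y^\rho\vdash s:\sigma$ infer $\Gamma_1,\Gamma_2\vdash t(\lambda x^\tau.\lambda y^\rho.s):\sigma$; ($\mathbf{L}^-$) from $\Gamma\vdash t:\mathbf{L}(\tau)$ and $\emptyset\vdash s:\Diamond\multimap\tau\multimap\rho\multimap\rho$ infer $\Gamma\vdash t\{s\}:\rho\multimap\rho$. A term is almost closed if all its free variables have type $\Diamond$. Lists: a list with $n$ entries ($n\ge0$) is a term $\mathsf{cons}_\tau d_1a_1(\mathsf{cons}_\tau d_2a_2(\cdots(\mathsf{cons}_\tau d_na_n\,\mathsf{nil}_\tau)\cdots))$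 where the $d_i$ are arbitrary terms of type $\Diamond$ and the $a_i$ arbitrary terms of type $\tau$ (for $n=0$ this is $\mathsf{nil}_\tau$). Conversions $\mapsto$: $(\lambda x.t)s\mapsto t[s/x]$; $\langle t,s\rangle\mathsf{tt}\mapsto t$; $\langle t,s\rangle\mathsf{ff}\mapsto s$; $\mathsf{tt}\langle t,s\rangle\mapsto t$; $\mathsf{ff}\langle t,s\rangle\mapsto s$; $\otimes_{\tau,\rho}ts(\lambda x^\tau.\lambda y^\rho.r)\mapsto r[t,s/x,y]$ (simultaneous substitution); $\mathsf{nil}_\tau\{t\}s\mapsto s$; $\mathsf{cons}_\tau d\,a\,\ell\{t\}s\mapsto t\,d\,a\,(\ell\{t\}s)$ provided $\ell$ is a list. The reduction relation $\to$ is inductively defined by: if $t\mapsto t'$ then $t\to t'$; if $t\to t'$ then $ts\to t's$; if $s\to s'$ then $ts\to ts'$. A term $t$ is normal if there is no $t'$ with $t\to t'$. *)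

(* Locally nameless representation of the raw terms:
   bound variables are de Bruijn indices (so alpha-equivalent terms are
   syntactically equal), free variables are typed names x^tau = (n, tau). *)
From Stdlib Require Import List Arith.
Import ListNotations.

Inductive ty : Type :=
| TDia : ty
| TB : ty
| TLolli : ty -> ty -> ty
| TTens : ty -> ty -> ty
| TProd : ty -> ty -> ty
| TL : ty -> ty.

Definition var : Type := (nat * ty)%type.

Inductive const : Type :=
| CTT : const
| CFF : const
| CNil : ty -> const
| CCons : ty -> const
| CTensI : ty -> ty -> const.

Definition const_ty (c : const) : ty :=
  match c with
  | CTT | CFF => TB
  | CNil a => TL a
  | CCons a => TLolli TDia (TLolli a (TLolli (TL a) (TL a)))
  | CTensI a r => TLolli a (TLolli r (TTens a r))
  end.

Inductive tm : Type :=
| BVar : nat -> tm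
| FVar : var -> tm
| Con : const -> tm
| Lam : ty -> tm -> tm
| Pair : tm -> tm -> tm
| App : tm -> tm -> tm
| Brace : tm -> tm.

Fixpoint open_rec (k : nat) (u : tm) (t : tm) : tm :=
  match t with
  | BVar i => if Nat.eqb i k then u else BVar i
  | FVar x => FVar x
  | Con c => Con c
  | Lam a b => Lam a (open_rec (S k) u b)
  | Pair t1 t2 => Pair (open_rec k u t1) (open_rec k u t2)
  | App t1 t2 => App (open_rec k u t1) (open_rec k u t2)
  | Brace t1 => Brace (open_rec k u t1)
  end.

Definition open (b u : tm) : tm := open_rec 0 u b.

(* body r of lambda x. lambda y. r, instantiated: r[u,v/x,y] *)
Definition open2 (r u v : tm) : tm := open_rec 0 v (open_rec 1 u r).

Fixpoint fv (t : tm) : list var :=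
  match t with
  | BVar _ => []
  | FVar x => [x]
  | Con _ => []
  | Lam _ b => fv b
  | Pair t1 t2 => fv t1 ++ fv t2
  | App t1 t2 => fv t1 ++ fv t2
  | Brace t1 => fv t1
  end.

(* Contexts are finite sets of typed variables, represented by lists
   (only membership matters). [ctx_split G G1 G2] means G = G1,G2, i.e.
   G = G1 \cup G2 with G1 and G2 disjoint. *)
Definition ctx_split (G G1 G2 : list var) : Prop :=
  (forall v, In v G <-> In v G1 \/ In v G2) /\
  (forall v, In v G1 -> ~ In v G2).

Inductive typed : list var -> tm -> ty -> Prop :=
| T_Var : forall G x, In x G -> typed G (FVar x) (snd x)
| T_Const : forall G c, typed G (Con c) (const_ty c)
| T_Lam : forall G a r b n,
    ~ In (n, a) (fv b) ->
    typed ((n, a) :: G) (open b (FVar (n, a))) r ->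
    typed G (Lam a b) (TLolli a r)
| T_App : forall G G1 G2 t s a r,
    ctx_split G G1 G2 ->
    typed G1 t (TLolli a r) -> typed G2 s a ->
    typed G (App t s) r
| T_Pair : forall G t s a r,
    typed G t a -> typed G s r -> typed G (Pair t s) (TProd a r)
| T_Fst : forall G t a r,
    typed G t (TProd a r) -> typed G (App t (Con CTT)) a
| T_Snd : forall G t a r,
    typed G t (TProd a r) -> typed G (App t (Con CFF)) r
| T_If : forall G G1 G2 t s r a,
    ctx_split G G1 G2 ->
    typed G1 t TB -> typed G2 s a -> typed G2 r a ->
    typed G (App t (Pair s r)) a
| T_TensE : forall G G1 G2 t b a r sg n m,
    ctx_split G G1 G2 ->
    typed G1 t (TTens a r) ->
    (n, a) <> (m, r) -> ~ In (n, a) G2 -> ~ In (m, r) G2 ->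
    ~ In (n, a) (fv b) -> ~ In (m, r) (fv b) ->
    typed ((n, a) :: (m, r) :: G2) (open2 b (FVar (n, a)) (FVar (m, r))) sg ->
    typed G (App t (Lam a (Lam r b))) sg
| T_ListE : forall G t s a r,
    typed G t (TL a) ->
    typed [] s (TLolli TDia (TLolli a (TLolli r r))) ->
    typed G (App t (Brace s)) (TLolli r r).

Inductive is_list_of (a : ty) : tm -> Prop :=
| L_nil : is_list_of a (Con (CNil a))
| L_cons : forall d x l,
    (exists G, typed G d TDia) -> (exists G, typed G x a) ->
    is_list_of a l ->
    is_list_of a (App (App (App (Con (CCons a)) d) x) l).

Definition is_list (t : tm) : Prop := exists a, is_list_of a t.

Inductive conv : tm -> tm -> Prop :=
| C_beta : forall a b s, conv (App (Lam a b) s) (open b s)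
| C_fst : forall t s, conv (App (Pair t s) (Con CTT)) t
| C_snd : forall t s, conv (App (Pair t s) (Con CFF)) s
| C_iftt : forall t s, conv (App (Con CTT) (Pair t s)) t
| C_ifff : forall t s, conv (App (Con CFF) (Pair t s)) s
| C_tens : forall a r t s b,
    conv (App (App (App (Con (CTensI a r)) t) s) (Lam a (Lam r b))) (open2 b t s)
| C_nil : forall a t s, conv (App (App (Con (CNil a)) (Brace t)) s) s
| C_cons : forall a d x l t s,
    is_list l ->
    conv (App (App (App (App (App (Con (CCons a)) d) x) l) (Brace t)) s)
         (App (App (App t d) x) (App (App l (Brace t)) s)).

Inductive red : tm -> tm -> Prop :=
| R_conv : forall t t', conv t t' -> red t t'
| R_appl : forall t t' s, red t t' -> red (App t s) (App t' s)
| R_appr : forall t s s', red s s' -> red (App t s) (App t s').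

Definition normal (t : tm) : Prop := forall t', ~ red t t'.

Definition almost_closed (t : tm) : Prop :=
  forall x, In x (fv t) -> snd x = TDia.

(* By induction on the typing derivation, every normal almost-closed term is
   in canonical form for its type: a diamond variable, a boolean constant, a
   list, a pair, a lambda, a partially applied constructor [cons] or [(x)], or
   an iterator [l {s}] over a list [l].  Almost-closedness rules out free
   variables of other types, and an elimination whose principal argument is
   canonical is always a redex, which normality forbids. *)
From Stdlib Require Import List.

Inductive canonical : tm -> ty -> Prop :=
| can_var n : canonical (FVar (n, TDia)) TDia
| can_tt : canonical (Con CTT) TB
| can_ff : canonical (Con CFF) TB
| can_list a l : is_list_of a l -> canonical l (TL a)
| can_pair u v a r : canonical (Pair u v) (TProd a r)
| can_tens a r u v :
    canonical (App (App (Con (CTensI a r)) u) v) (TTens a r)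
| can_lam a b r : canonical (Lam a b) (TLolli a r)
| can_cons0 a :
    canonical (Con (CCons a)) (TLolli TDia (TLolli a (TLolli (TL a) (TL a))))
| can_cons1 a d :
    (exists G, typed G d TDia) ->
    canonical (App (Con (CCons a)) d) (TLolli a (TLolli (TL a) (TL a)))
| can_cons2 a d x :
    (exists G, typed G d TDia) -> (exists G, typed G x a) ->
    canonical (App (App (Con (CCons a)) d) x) (TLolli (TL a) (TL a))
| can_tensI0 a r : canonical (Con (CTensI a r)) (TLolli a (TLolli r (TTens a r)))
| can_tensI1 a r u : canonical (App (Con (CTensI a r)) u) (TLolli r (TTens a r))
| can_iter l s r : is_list l -> canonical (App l (Brace s)) (TLolli r r).

Lemma normal_not_conv t t' : normal t -> conv t t' -> False.
Proof. intros Hn Hc. exact (Hn t' (R_conv _ _ Hc)). Qed.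

Lemma normal_app_l t s : normal (App t s) -> normal t.
Proof. intros Hn t' Hr. exact (Hn (App t' s) (R_appl _ _ _ Hr)). Qed.

Lemma normal_app_r t s : normal (App t s) -> normal s.
Proof. intros Hn s' Hr. exact (Hn (App t s') (R_appr _ _ _ Hr)). Qed.

Lemma almost_closed_app_l t s : almost_closed (App t s) -> almost_closed t.
Proof. intros Hac x Hx. apply Hac. simpl. apply in_or_app. now left. Qed.

Lemma almost_closed_app_r t s : almost_closed (App t s) -> almost_closed s.
Proof. intros Hac x Hx. apply Hac. simpl. apply in_or_app. now right. Qed.

Lemma canonical_const c : canonical (Con c) (const_ty c).
Proof. destruct c; repeat constructor. Qed.

Lemma canonical_list a l : canonical l (TL a) -> is_list_of a l.
Proof. now inversion 1. Qed.

Lemma iter_list_redex l s u : is_list l -> normal (App (App l (Brace s)) u) -> False.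
Proof.
  intros [a Hl] Hn. inversion Hl; subst.
  - eapply normal_not_conv; [exact Hn | apply C_nil].
  - eapply normal_not_conv; [exact Hn | apply C_cons; now exists a].
Qed.

Lemma canonical_app G t s a r :
  normal (App t s) -> canonical t (TLolli a r) -> canonical s a -> typed G s a ->
  canonical (App t s) r.
Proof.
  intros Hn Ht Hs Hts. inversion Ht; subst.
  - exfalso. eapply normal_not_conv; [exact Hn | apply C_beta].
  - constructor. eauto.
  - constructor; eauto.
  - constructor. constructor; eauto using canonical_list.
  - constructor.
  - constructor.
  - exfalso. eapply iter_list_redex; eassumption.
Qed.

Lemma normal_canonical G t sg :
  typed G t sg -> normal t -> almost_closed t -> canonical t sg.
Proof.
  induction 1 as [G [n a] Hin | G c | | G G1 G2 t s a r _ Ht IHt Hs IHs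
    | | G t a r Ht IHt | G t a r Ht IHt | G G1 G2 t s r a _ Ht IHt _ _ _ _
    | G G1 G2 t b a r sg n m _ Ht IHt | G t s a r Ht IHt];
    intros Hn Hac;
    try pose proof (IHt (normal_app_l _ _ Hn) (almost_closed_app_l _ _ Hac))
      as Hcan.
  - assert (a = TDia) by (apply (Hac (n, a)); now left). subst. constructor.
  - apply canonical_const.
  - constructor.
  - eapply canonical_app; eauto using normal_app_r, almost_closed_app_r.
  - constructor.
  - exfalso. inversion Hcan; subst. eapply normal_not_conv; [exact Hn | apply C_fst].
  - exfalso. inversion Hcan; subst. eapply normal_not_conv; [exact Hn | apply C_snd].
  - exfalso. inversion Hcan; subst; eapply normal_not_conv; try exact Hn.
    + apply C_iftt.
    + apply C_ifff.
  - exfalso. inversion Hcan; subst. eapply normal_not_conv; [exact Hn | apply C_tens].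
  - constructor. exists a. now apply canonical_list.
Qed.

Theorem proposition3p6 (t : tm) (G : list var) (sg : ty) :
  normal t -> almost_closed t -> typed G t sg ->
  (forall a, sg = TL a -> is_list t) /\
  (sg = TB -> t = Con CTT \/ t = Con CFF) /\
  (sg = TDia -> exists n, t = FVar (n, TDia)).
Proof.
  intros Hn Hac Ht.
  pose proof (normal_canonical _ _ _ Ht Hn Hac) as Hcan.
  split; [| split]; intros; subst; inversion Hcan; subst; eauto.
  exists a. now apply canonical_list.
Qed.
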